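(* In any finite discounted stochastic game and for any $\bm{\Lambda}=(\Lambda^1,\dots,\Lambda^N)\in\mathbb{R}^N$: (i) for every $\bm{\pi}\in\bm{\Pi}$, $\bm{\pi}\in\bm{\Pi}_{\rm eq}$ if and only if $\{\bm{\pi}\}$ is a minimal cumber set; (ii) for every $\bm{\pi}\in\bm{\Pi}\setminus\bm{\Pi}^{\bm{\Lambda}}_{\rm cumber}$ there is a multi-DM strict best reply path starting at $\bm{\pi}$ and ending in $\bm{\Pi}^{\bm{\Lambda}}_{\rm cumber}$.
   Context: Game setup: finite discounted stochastic game with $N$ decision makers, finite state set $\mathbb{X}$, finite action sets $\mathbb{U}^i$, discount factors $\beta^i\in(0,1)$, costs $c^i:\mathbb{X}\times\mathbb{U}\to\mathbb{R}$, transition kernel $P$. $\Pi^i$ = set of maps $\mathbb{X}\to\mathbb{U}^i$, $\bm{\Pi}=\times_i\Pi^i$; $J^i_x(\bm{\pi})=E[\sum_{t\ge0}(\beta^i)^tc^i(x_t,\bm{\pi}(x_t))\mid x_0=x]$ with $x_{t+1}\sim P(\cdot\mid x_t,\bm{\pi}(x_t))$; $\tilde S^i(\bm{\pi})=\sum_{x\in\mathbb{X}}J^i_x(\bm{\pi})$. Best reply, strict best reply with respect to $\bm{\pi}$ (a best reply to $\bm{\pi}^{-i}$ with strictly smaller $J^i_x$ than $\pi^i$ at some $x$), $\bm{\Pi}_{\rm eq}$ (all DMs best-replying), multi-DM strict best reply path (consecutive elements differ, and every DM that changes switches to a strict best reply with respect to the previous joint policy), $\widetilde{BR}(\bm{\pi})$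 and cumber sets are as follows: $\widetilde{BR}(\bm{\pi})=\{\tilde{\bm{\pi}}:\forall i,\ \tilde\pi^i\ne\pi^i\Rightarrow\tilde\pi^i$ strict best reply with respect to $\bm{\pi}\}$; a nonempty $\tilde{\bm{\Pi}}$ is a cumber set if $\bm{\pi}\in\tilde{\bm{\Pi}}\Rightarrow\widetilde{BR}(\bm{\pi})\subseteq\tilde{\bm{\Pi}}$, minimal if it properly contains no cumber set. Further, $\widetilde{BR}^{\bm{\Lambda}}(\bm{\pi})=\{\tilde{\bm{\pi}}\in\bm{\Pi}:\forall i,\ \tilde\pi^i\ne\pi^i\Rightarrow(\tilde S^i(\bm{\pi})>\Lambda^i$ and $\tilde\pi^i$ is a strict best reply with respect to $\bm{\pi})\}$; a nonempty $\tilde{\bm{\Pi}}\subseteq\bm{\Pi}$ is a $\bm{\Lambda}$-cumber set if $\bm{\pi}\in\tilde{\bm{\Pi}}\Rightarrow\widetilde{BR}^{\bm{\Lambda}}(\bm{\pi})\subseteq\tilde{\bm{\Pi}}$, minimal if it properly contains no other $\bm{\Lambda}$-cumber set; $\bm{\Pi}^{\bm{\Lambda}}_{\rm cumber}$ is the union of all minimal $\bm{\Lambda}$-cumber sets. *)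

From Stdlib Require Import Reals ClassicalEpsilon.
From mathcomp Require Import all_boot.

Unset Printing Implicit Defensive.
Local Open Scope R_scope.

Record game := Game {
  nDM : nat;
  state : finType;
  act : 'I_nDM -> finType;
  beta : 'I_nDM -> R;
  cost : 'I_nDM -> state -> {dffun forall i : 'I_nDM, act i} -> R;
  (* trans x u y = P(y | x, u) *)
  trans : state -> {dffun forall i : 'I_nDM, act i} -> state -> R;
  beta_range : forall i, (0 < beta i < 1);
  trans_nonneg : forall x u y, (0 <= trans x u y);
  trans_sum : forall x u, \big[Rplus/0]_(y : state) trans x u y = 1
}.

Arguments act {g}.
Arguments beta {g}.
Arguments cost {g}.
Arguments trans {g}.

Section Game.
Variable g : game.

Definition policy (i : 'I_(nDM g)) := {ffun state g -> act i}.
Definition jpolicy := {dffun forall i : 'I_(nDM g), policy i}.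

Definition jact (pi : jpolicy) (x : state g) : {dffun forall i : 'I_(nDM g), act i} :=
  finfun (fun i => pi i x).

Definition upd (pi : jpolicy) (i : 'I_(nDM g)) (p : policy i) : jpolicy :=
  finfun (dfwith (fun j => pi j) p).

(* dist pi t x y = Pr(x_t = y | x_0 = x) under pi *)
Fixpoint dist (pi : jpolicy) (t : nat) (x y : state g) : R :=
  match t with
  | O => if y == x then 1 else 0
  | S t' => \big[Rplus/0]_(z : state g) (dist pi t' x z * trans z (jact pi z) y)
  end.

Definition stage_cost (i : 'I_(nDM g)) (pi : jpolicy) (x : state g) (t : nat) : R :=
  \big[Rplus/0]_(y : state g) (dist pi t x y * cost i y (jact pi y)).

(* J^i_x(pi) = sum_{t>=0} beta^t E[c^i(x_t, pi(x_t))] (the series converges) *)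
Definition J (i : 'I_(nDM g)) (pi : jpolicy) (x : state g) : R :=
  epsilon (inhabits 0)
    (fun v => infinite_sum (fun t => (pow (beta i) t * stage_cost i pi x t)) v).

Definition Stilde (i : 'I_(nDM g)) (pi : jpolicy) : R :=
  \big[Rplus/0]_(x : state g) J i pi x.

Definition best_reply (pi : jpolicy) (i : 'I_(nDM g)) (p : policy i) : Prop :=
  forall (q : policy i) (x : state g), (J i (upd pi i p) x <= J i (upd pi i q) x).

Definition strict_best_reply (pi : jpolicy) (i : 'I_(nDM g)) (p : policy i) : Prop :=
  best_reply pi i p /\ exists x : state g, (J i (upd pi i p) x < J i pi x).

Definition equilibrium (pi : jpolicy) : Prop :=
  forall i, best_reply pi i (pi i).

Definition BRt (pi pt : jpolicy) : Prop :=
  forall i, pt i <> pi i -> strict_best_reply pi i (pt i).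

Definition cumber (S : jpolicy -> Prop) : Prop :=
  (exists pi, S pi) /\ forall pi pt, S pi -> BRt pi pt -> S pt.

Definition min_cumber (S : jpolicy -> Prop) : Prop :=
  cumber S /\
  forall S', cumber S' -> (forall p, S' p -> S p) -> (forall p, S p -> S' p).

Definition BRL (Lam : 'I_(nDM g) -> R) (pi pt : jpolicy) : Prop :=
  forall i, pt i <> pi i ->
    (Stilde i pi > Lam i) /\ strict_best_reply pi i (pt i).

Definition Lcumber (Lam : 'I_(nDM g) -> R) (S : jpolicy -> Prop) : Prop :=
  (exists pi, S pi) /\ forall pi pt, S pi -> BRL Lam pi pt -> S pt.

Definition min_Lcumber (Lam : 'I_(nDM g) -> R) (S : jpolicy -> Prop) : Prop :=
  Lcumber Lam S /\
  forall S', Lcumber Lam S' -> (forall p, S' p -> S p) -> (forall p, S p -> S' p).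

Definition Pi_cumber (Lam : 'I_(nDM g) -> R) (pi : jpolicy) : Prop :=
  exists S, min_Lcumber Lam S /\ S pi.

(* pi = p_0, p_1, ..., p_k with p :: s the sequence: multi-DM strict best
   reply path *)
Fixpoint sbr_path (p : jpolicy) (s : seq jpolicy) : Prop :=
  match s with
  | [::] => True
  | q :: s' => q <> p /\ BRt p q /\ sbr_path q s'
  end.

End Game.

Arguments jact {g}.
Arguments upd {g}.
Arguments dist {g}.
Arguments stage_cost {g}.
Arguments J {g}.
Arguments Stilde {g}.
Arguments best_reply {g}.
Arguments strict_best_reply {g}.
Arguments equilibrium {g}.
Arguments BRt {g}.
Arguments cumber {g}.
Arguments min_cumber {g}.
Arguments BRL {g}.
Arguments Lcumber {g}.
Arguments min_Lcumber {g}.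
Arguments Pi_cumber {g}.
Arguments sbr_path {g}.

From HB Require Import structures.
From Pilot Require Import Defs.
From Stdlib Require Import Reals Lra Classical ClassicalEpsilon.
From Coquelicot Require Import Coquelicot.
From mathcomp Require Import all_boot.

(* Best replies exist: with the other DMs fixed, DM i faces a finite discounted MDP,
   and a policy minimizing the total cost [Stilde] is optimal at every state, since a
   one-state improvement of its Bellman backup would, by the comparison principle
   for the discounted Bellman operator, lower every value and strictly one of them.
   Hence (i): at an equilibrium no DM has a strict best reply, so BR~(pi) = {pi};
   otherwise a best reply of a non-best-replying DM is strict and leaves {pi}.
   For (ii), the policies reachable from pi along strict best reply paths form a
   Lambda-cumber set, which by finiteness contains a minimal one. *)

Local Open Scope R_scope.

Lemma RplusA : associative Rplus. Proof. by move=> *; ring. Qed.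
Lemma RmultA : associative Rmult. Proof. by move=> *; ring. Qed.
HB.instance Definition _ := Monoid.isComLaw.Build R 0 Rplus RplusA Rplus_comm Rplus_0_l.
HB.instance Definition _ := Monoid.isComLaw.Build R 1 Rmult RmultA Rmult_comm Rmult_1_l.
HB.instance Definition _ := Monoid.isMulLaw.Build R 0 Rmult Rmult_0_l Rmult_0_r.
HB.instance Definition _ :=
  Monoid.isAddLaw.Build R Rmult Rplus Rmult_plus_distr_r Rmult_plus_distr_l.

Section FiniteSums.
Context {T : finType}.
Implicit Types (P : pred T) (f h : T -> R).

Lemma Rsum_le P f h : (forall y, f y <= h y) ->
  \big[Rplus/0]_(y | P y) f y <= \big[Rplus/0]_(y | P y) h y.
Proof. by move=> fh; apply: (big_ind2 (fun a b => a <= b)) => // *; lra. Qed.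

Lemma Rsum_ge0 P f : (forall y, 0 <= f y) -> 0 <= \big[Rplus/0]_(y | P y) f y.
Proof. by move=> f0; apply: (big_ind (fun a => 0 <= a)) => // *; lra. Qed.

Lemma Rsum_lt f h y0 : (forall y, f y <= h y) -> f y0 < h y0 ->
  \big[Rplus/0]_y f y < \big[Rplus/0]_y h y.
Proof.
move=> fh fh0; rewrite (bigD1 y0) // [X in _ < X](bigD1 y0) //=.
have := Rsum_le (fun y => y != y0) _ _ fh; lra.
Qed.

Lemma Rsum_term_le f y0 : (forall y, 0 <= f y) -> f y0 <= \big[Rplus/0]_y f y.
Proof. by move=> f0; rewrite (bigD1 y0) //=; have := Rsum_ge0 (fun y => y != y0) _ f0; lra. Qed.

Lemma RsumB f h :
  \big[Rplus/0]_y f y - \big[Rplus/0]_y h y = \big[Rplus/0]_y (f y - h y).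
Proof. by apply: (big_ind3 (fun a b c => a - b = c)) => // *; lra. Qed.

Lemma Rsum_delta f x : \big[Rplus/0]_y ((if y == x then 1 else 0) * f y) = f x.
Proof.
rewrite (bigD1 x) //= eqxx big1; first ring.
by move=> y /negbTE ->; ring.
Qed.

Lemma Rsum_deltar f x : \big[Rplus/0]_y (f y * (if x == y then 1 else 0)) = f x.
Proof. by rewrite -[RHS]Rsum_delta; apply: eq_bigr => y _; rewrite eq_sym; ring. Qed.

Lemma Rfinite_argmin f (x : T) : exists m, forall y, f m <= f y.
Proof.
have argmin_seq s a : exists2 m, m \in a :: s & forall y, y \in a :: s -> f m <= f y.
  elim: s a => [|b s IH] a.
    by exists a; rewrite ?inE // => y; rewrite inE => /eqP->; lra.
  have [m ms Hm] := IH b.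
  have [fam|fma] := Rle_lt_dec (f a) (f m).
    exists a; rewrite ?inE ?eqxx // => y; rewrite inE => /orP[/eqP->|ys]; first lra.
    by have := Hm y ys; lra.
  exists m; first by rewrite inE ms orbT.
  by move=> y; rewrite inE => /orP[/eqP->|/Hm//]; lra.
have [m _ Hm] := argmin_seq (enum T) x.
by exists m => y; apply: Hm; rewrite inE mem_enum orbT.
Qed.

End FiniteSums.

Lemma is_series_0 : is_series (fun _ : nat => 0) 0.
Proof.
have half_lt1 : Rabs (/2) < 1 by rewrite Rabs_pos_eq; lra.
have := is_series_scal_r 0 _ _ (is_series_geom _ half_lt1).
by rewrite Rmult_0_r; apply: is_series_ext => n; rewrite /= Rmult_0_r.
Qed.

Lemma is_series_big_sum (I : Type) (r : seq I) (a : I -> nat -> R) (l : I -> R) :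
  (forall w, is_series (a w) (l w)) ->
  is_series (fun t => \big[Rplus/0]_(w <- r) a w t) (\big[Rplus/0]_(w <- r) l w).
Proof.
move=> al; elim: r => [|w r IH].
  by rewrite big_nil; apply: is_series_ext is_series_0 => n; rewrite big_nil.
rewrite big_cons; apply: is_series_ext (is_series_plus _ _ _ _ (al w) IH).
by move=> n; rewrite big_cons.
Qed.

Lemma superharmonic_ge0 (T : finType) (b : R) (Q : T -> T -> R) (w : T -> R) :
  0 <= b < 1 -> (forall x y, 0 <= Q x y) -> (forall x, \big[Rplus/0]_y Q x y = 1) ->
  (forall x, b * \big[Rplus/0]_y (Q x y * w y) <= w x) ->
  forall x, 0 <= w x.
Proof.
move=> b01 Q0 Q1 wsup x; have [m wm] := Rfinite_argmin w x.
have : b * w m <= w m.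
  apply: Rle_trans (wsup m); apply: Rmult_le_compat_l; first lra.
  rewrite -[X in X <= _]Rmult_1_l -(Q1 m) big_distrl /=.
  by apply: Rsum_le => y; apply: Rmult_le_compat_l.
by have := wm x; nra.
Qed.

Section PolicyEvaluation.
Context {g : game} (i : 'I_(nDM g)).
Implicit Types (q : jpolicy g) (v : state g -> R) (x y w z : state g).

Definition kernel q x y := trans x (jact q x) y.

Definition bellman_op q v x :=
  cost i x (jact q x) + beta i * \big[Rplus/0]_y (kernel q x y * v y).

Definition disc_cost q x t := beta i ^ t * stage_cost i q x t.

Lemma beta_range_le : 0 <= beta i < 1.
Proof. by have := beta_range g i; lra. Qed.

Lemma kernel_ge0 q x y : 0 <= kernel q x y.
Proof. exact: trans_nonneg. Qed.

Lemma kernel_sum1 q x : \big[Rplus/0]_y kernel q x y = 1.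
Proof. exact: trans_sum. Qed.

Lemma dist_ge0 q t x y : 0 <= Defs.dist q t x y.
Proof.
elim: t y => [|t IH] y /=; first by case: eqP; lra.
by apply: Rsum_ge0 => z; apply: Rmult_le_pos => //; apply: trans_nonneg.
Qed.

Lemma dist_sum1 q t x : \big[Rplus/0]_y Defs.dist q t x y = 1.
Proof.
elim: t => [|t IH] /=.
  by rewrite -[RHS](Rsum_delta (fun _ => 1) x); apply: eq_bigr => y _; rewrite eq_sym; ring.
rewrite exchange_big /= -[RHS]IH; apply: eq_bigr => z _.
by rewrite -big_distrr /= trans_sum Rmult_1_r.
Qed.

Lemma dist_le1 q t x y : Defs.dist q t x y <= 1.
Proof. by rewrite -(dist_sum1 q t x); apply: Rsum_term_le => z; apply: dist_ge0. Qed.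

(* [dist] unrolls the last step of the chain; the Bellman recursion needs the first. *)
Lemma dist_succ_first q t x y :
  Defs.dist q t.+1 x y = \big[Rplus/0]_w (kernel q x w * Defs.dist q t w y).
Proof.
elim: t x y => [|t IH] x y; first by rewrite /= Rsum_delta Rsum_deltar.
rewrite -[LHS]/(\big[Rplus/0]_z (Defs.dist q t.+1 x z * trans z (jact q z) y)).
under eq_bigr => z _ do rewrite IH big_distrl /=.
rewrite exchange_big /=; apply: eq_bigr => w _.
by rewrite big_distrr /=; apply: eq_bigr => z _; ring.
Qed.

Lemma stage_cost_succ q x t :
  stage_cost i q x t.+1 = \big[Rplus/0]_w (kernel q x w * stage_cost i q w t).
Proof.
rewrite /stage_cost; under eq_bigr => y _ do rewrite dist_succ_first big_distrl /=.
rewrite exchange_big /=; apply: eq_bigr => w _.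
by rewrite big_distrr /=; apply: eq_bigr => z _; ring.
Qed.

Lemma stage_cost_bound q x t :
  Rabs (stage_cost i q x t) <= \big[Rplus/0]_y Rabs (cost i y (jact q y)).
Proof.
apply: (Rle_trans _ (\big[Rplus/0]_y Rabs (Defs.dist q t x y * cost i y (jact q y)))).
  apply: (big_ind2 (fun a b => Rabs a <= b)) => [|a b c d ab cd|y _].
  - by rewrite Rabs_R0; lra.
  - by apply: Rle_trans (Rabs_triang _ _) _; lra.
  - exact: Rle_refl.
apply: Rsum_le => y; rewrite Rabs_mult Rabs_pos_eq; last exact: dist_ge0.
have := dist_le1 q t x y; have := dist_ge0 q t x y.
have := Rabs_pos (cost i y (jact q y)); nra.
Qed.

Lemma ex_series_disc_cost q x : ex_series (disc_cost q x).
Proof.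
have b01 := beta_range g i.
have b_lt1 : Rabs (beta i) < 1 by rewrite Rabs_pos_eq; lra.
have b_pow0 n : 0 <= beta i ^ n by apply: pow_le; lra.
apply: (ex_series_le _
  (fun n => beta i ^ n * \big[Rplus/0]_y Rabs (cost i y (jact q y)))).
  move=> n; rewrite /norm /= /abs /= /disc_cost Rabs_mult Rabs_pos_eq //.
  by apply: Rmult_le_compat_l => //; apply: stage_cost_bound.
by apply: ex_series_scal_r; eexists; exact: is_series_geom b_lt1.
Qed.

Lemma is_series_J q x : is_series (disc_cost q x) (J i q x).
Proof.
rewrite /J; apply/is_series_Reals; apply: epsilon_spec.
by have [l ?] := ex_series_disc_cost q x; exists l; apply/is_series_Reals.
Qed.

Lemma J_bellman q x : J i q x = bellman_op q (J i q) x.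
Proof.
have tail_J : is_series (fun t => disc_cost q x t.+1) (J i q x - disc_cost q x 0).
  apply: is_series_incr_1; rewrite /plus /=.
  by rewrite (_ : _ + _ = J i q x); [apply: is_series_J | ring].
have tail_bellman : is_series (fun t => disc_cost q x t.+1)
    (beta i * \big[Rplus/0]_y (kernel q x y * J i q y)).
  apply: is_series_ext; last first.
    apply: (is_series_scal_l (beta i)); apply: is_series_big_sum => y.
    exact: (is_series_scal_l (kernel q x y) _ _ (is_series_J q y)).
  move=> n; rewrite /scal /= /mult /= /disc_cost stage_cost_succ !big_distrr /=.
  by apply: eq_bigr => w _; ring.
have := is_series_unique _ _ tail_J; rewrite (is_series_unique _ _ tail_bellman).
rewrite /bellman_op /disc_cost /= /stage_cost Rsum_delta; lra.
Qed.

Lemma bellman_opB q u v x : bellman_op q u x - bellman_op q v x =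
  beta i * \big[Rplus/0]_y (kernel q x y * (u y - v y)).
Proof.
have -> : \big[Rplus/0]_y (kernel q x y * (u y - v y)) =
    \big[Rplus/0]_y (kernel q x y * u y) - \big[Rplus/0]_y (kernel q x y * v y).
  by rewrite RsumB; apply: eq_bigr => y _; ring.
rewrite /bellman_op; ring.
Qed.

Lemma J_ge_subsolution q v : (forall x, v x <= bellman_op q v x) ->
  forall x, v x <= J i q x.
Proof.
move=> vsub x; suff: 0 <= J i q x - v x by lra.
apply: (@superharmonic_ge0 _ _ _ (fun y => J i q y - v y) beta_range_le
  (kernel_ge0 q) (kernel_sum1 q)) => y.
by rewrite -bellman_opB -J_bellman; have := vsub y; lra.
Qed.

Lemma J_le_supersolution q v : (forall x, bellman_op q v x <= v x) ->
  forall x, J i q x <= v x.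
Proof.
move=> vsup x; suff: 0 <= v x - J i q x by lra.
apply: (@superharmonic_ge0 _ _ _ (fun y => v y - J i q y) beta_range_le
  (kernel_ge0 q) (kernel_sum1 q)) => y.
by rewrite -bellman_opB -J_bellman; have := vsup y; lra.
Qed.

Lemma J_lt_supersolution q v x0 : (forall x, bellman_op q v x <= v x) ->
  bellman_op q v x0 < v x0 -> J i q x0 < v x0.
Proof.
move=> vsup vsup0; have := bellman_opB q v (J i q) x0; rewrite -J_bellman.
have : 0 <= \big[Rplus/0]_y (kernel q x0 y * (v y - J i q y)).
  apply: Rsum_ge0 => y; apply: Rmult_le_pos; first exact: kernel_ge0.
  by have := J_le_supersolution _ _ vsup y; lra.
by have := beta_range g i; nra.
Qed.

End PolicyEvaluation.

Section BestReplies.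
Context {g : game} (i : 'I_(nDM g)).
Implicit Types (pi : jpolicy g) (p : policy g i) (x y : state g).

Lemma upd_eq pi p : upd pi i p i = p.
Proof. by rewrite /upd ffunE dfwith_in. Qed.

Lemma upd_neq pi p j : i != j -> upd pi i p j = pi j.
Proof. by move=> ij; rewrite /upd ffunE dfwith_out. Qed.

Lemma upd_id pi : upd pi i (pi i) = pi.
Proof.
apply/ffunP => j; have [<-|ij] := eqVneq i j; first exact: upd_eq.
exact: upd_neq.
Qed.

Lemma bellman_op_upd pi p p' v x : p x = p' x ->
  bellman_op i (upd pi i p) v x = bellman_op i (upd pi i p') v x.
Proof.
move=> pp'; rewrite /bellman_op /kernel; have -> // : jact (upd pi i p) x = jact (upd pi i p') x.
apply/ffunP => j; rewrite !ffunE; have [<-|ij] := eqVneq i j.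
  by rewrite !dfwith_in.
by rewrite !dfwith_out.
Qed.

(* Otherwise switching from [ps] to [p'] at the single state where [p'] wins gives a
   policy whose Bellman operator maps [J ps] below itself, strictly there, so its
   total cost is smaller. *)
Lemma Stilde_min_bellman pi ps :
  (forall p, Stilde i (upd pi i ps) <= Stilde i (upd pi i p)) ->
  forall p' x, J i (upd pi i ps) x <= bellman_op i (upd pi i p') (J i (upd pi i ps)) x.
Proof.
move=> ps_min p' x0; apply: Rnot_lt_le => improves.
pose p'' : policy g i := [ffun y => if y == x0 then p' y else ps y].
have p''E y : p'' y = if y == x0 then p' y else ps y by rewrite ffunE.
have sup y : bellman_op i (upd pi i p'') (J i (upd pi i ps)) y <= J i (upd pi i ps) y.
  have [->|yx0] := eqVneq y x0.
    by rewrite (@bellman_op_upd pi p'' p') ?p''E ?eqxx //; lra.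
  rewrite (@bellman_op_upd pi p'' ps) ?p''E ?(negbTE yx0) //.
  by rewrite -J_bellman; lra.
have sup0 : bellman_op i (upd pi i p'') (J i (upd pi i ps)) x0 < J i (upd pi i ps) x0.
  by rewrite (@bellman_op_upd pi p'' p') ?p''E ?eqxx.
have := ps_min p''; rewrite /Stilde.
by have := Rsum_lt _ _ _ (J_le_supersolution _ _ _ sup) (J_lt_supersolution _ _ _ _ sup sup0); lra.
Qed.

Lemma best_reply_exists pi : exists p, best_reply pi i p.
Proof.
have [ps ps_min] := Rfinite_argmin (fun p => Stilde i (upd pi i p)) (pi i).
exists ps => p x; apply: J_ge_subsolution => y.
exact: Stilde_min_bellman.
Qed.

End BestReplies.

Section MinimalSets.
Context {T : finType}.

Definition minimal (C : (T -> Prop) -> Prop) (S : T -> Prop) :=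
  C S /\ forall S', C S' -> (forall p, S' p -> S p) -> forall p, S p -> S' p.

Lemma minimal_sub (C : (T -> Prop) -> Prop) S : C S ->
  exists S', minimal C S' /\ forall p, S' p -> S p.
Proof.
move=> CS; pose set_of (S : T -> Prop) := [set p | if excluded_middle_informative (S p) then true else false].
have in_set_of S' p : p \in set_of S' <-> S' p.
  by rewrite inE; case: excluded_middle_informative.
have [n] := ubnP #|set_of S|; elim: n => // n IH in S CS *; rewrite ltnS => cardS.
have [S_min|S_not_min] := classic (minimal C S); first by exists S.
have [S' [CS' [S'S not_SS']]] :
    exists S', C S' /\ (forall p, S' p -> S p) /\ ~ (forall p, S p -> S' p).
  apply: NNPP => no_S'; apply: S_not_min; split=> // S' CS' S'S.
  by apply: NNPP => not_SS'; apply: no_S'; exists S'.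
have [p0 not_imp] := not_all_ex_not _ _ not_SS'.
have [Sp0 not_S'p0] := imply_to_and _ _ not_imp.
have S'_proper : set_of S' \proper set_of S.
  apply/properP; split; first by apply/subsetP => p /in_set_of/S'S/in_set_of.
  by exists p0; [apply/in_set_of | apply/negP => /in_set_of].
have [S'' [S''_min S''S']] := IH S' CS' (leq_trans (proper_card S'_proper) cardS).
by exists S''; split=> // p /S''S'/S'S.
Qed.

End MinimalSets.

Section CumberSets.
Context {g : game}.
Implicit Types (pi pt : jpolicy g).

Lemma equilibrium_BRt pi pt : equilibrium pi -> BRt pi pt -> pt = pi.
Proof.
move=> eq_pi br; apply/ffunP => j; apply: NNPP => ne.
have [_ [x improves]] := br j ne.
by have := eq_pi j (pt j) x; rewrite upd_id; lra.
Qed.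

Lemma BRt_upd_best_reply pi j p :
  best_reply pi j p -> ~ best_reply pi j (pi j) -> BRt pi (upd pi j p).
Proof.
move=> br_p not_br k; have [<-|jk] := eqVneq j k; last by rewrite upd_neq.
rewrite upd_eq => _; split=> //.
have [q /not_all_ex_not[x /Rnot_le_lt]] := not_all_ex_not _ _ not_br.
by rewrite upd_id => q_better; exists x; have := br_p q x; lra.
Qed.

Lemma equilibrium_cumberE pi : equilibrium pi <-> cumber (fun p => p = pi).
Proof.
split=> [eq_pi|[_ closed] j].
  by split=> [|p pt -> br]; [exists pi | exact: equilibrium_BRt].
apply: NNPP => not_br; have [p br_p] := best_reply_exists j pi.
have upd_fixed := closed _ _ erefl (BRt_upd_best_reply _ _ _ br_p not_br).
have p_eq : p = pi j by rewrite -[in RHS]upd_fixed upd_eq.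
by apply: not_br; rewrite -p_eq.
Qed.

Lemma min_cumber_singleton pi :
  cumber (fun p => p = pi) -> min_cumber (fun p => p = pi).
Proof. by move=> c; split=> // S [[p Sp] _] sub _ ->; rewrite -(sub p Sp). Qed.

Definition sbr_reachable pi pt := exists s, sbr_path pi s /\ last pi s = pt.

Lemma sbr_path_rcons pi s pt :
  sbr_path pi s -> pt <> last pi s -> BRt (last pi s) pt -> sbr_path pi (rcons s pt).
Proof.
elim: s pi => [|q s IH] pi //= [q_ne [br path_s]] *.
by do 2!split=> //; apply: IH.
Qed.

Lemma Lcumber_sbr_reachable Lam pi : Lcumber Lam (sbr_reachable pi).
Proof.
split=> [|q pt [s [path_s last_s]] br]; first by exists pi, [::].
have [->|ne] := classic (pt = q); first by exists s.
exists (rcons s pt); split; last by rewrite last_rcons.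
by apply: sbr_path_rcons; rewrite ?last_s // => k /br[].
Qed.

End CumberSets.

Theorem mainTheorem6 (g : game) (Lam : 'I_(nDM g) -> R) :
  (forall pi : jpolicy g, equilibrium pi <-> min_cumber (fun p => p = pi)) /\
  (forall pi : jpolicy g, ~ Pi_cumber Lam pi ->
     exists s : seq (jpolicy g), sbr_path pi s /\ Pi_cumber Lam (last pi s)).
Proof.
split=> pi.
  rewrite equilibrium_cumberE; split=> [|[]//]; exact: min_cumber_singleton.
move=> _.
have [S [S_min S_reach]] := minimal_sub _ _ (Lcumber_sbr_reachable Lam pi).
have [[[q Sq] _] _] := S_min.
have [s [path_s last_s]] := S_reach q Sq.
by exists s; split=> //; rewrite last_s; exists S.
Qed.
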